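(* For every fixed positive integer $r$ there exist positive constants $c_0$ and $c$, depending only on $r$, such that the following holds. Let $d \geq 1$ and $h \geq 0$ be fixed integers and put $D = \max\{d,h\}$. Then for all positive integers $t$ and $x$ with $x \leq \frac{c_0}{D^r}\, t$, $$R(t,d,h,r;x] \geq \frac{c + o(1)}{D^{r+1}},$$ where $o(1)$ denotes a function of $t$ that tends to $0$ as $t \to \infty$.
   Context: Let $T=(t_{ij})$ be a $t\times n$ binary matrix over $\{0,1\}$. For $j\in[n]=\{1,\dots,n\}$ let $C_j=\{i\in[t]: t_{ij}=1\}$ be the support of the $j$th column. For disjoint sets $A,B\subseteq[n]$ define $Z_T(A,B)=\left|\left(\bigcap_{j\in B}C_j\right)\setminus\left(\bigcup_{j\in A}C_j\right)\right|$ and $Y_T(A,B)=\left|\left(\bigcap_{j\in B}C_j\right)\cap\left(\bigcup_{j\in A}C_j\right)\right|$. For positive integers $d,r,z$, $T$ is $(d,r;z]$-disjunct if $Z_T(A,B)\geq z$ for every pair of disjoint $A,B\subseteq[n]$ with $|A|=d$, $|B|=r$. For a positive integer $r$ and nonnegative integers $h,y$, $T$ is $(h,r;y]$-inclusive if $Y_T(A,B)\leq y$ for every pair of disjoint $A,B\subseteq[n]$ with $|A|=h$, $|B|=r$. For positive integers $d,r,x$ and a nonnegative integer $h$, $T$ is $(d,h,r;x]$-inclusively disjunct if there exist integers $z>0$ and $y\geq 0$ with $z-y\geq x$ such that $T$ is both $(d,r;z]$-disjunct and $(h,r;y]$-inclusive. Let $N(t,d,h,r;x]$ be the maximum $n$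 such that a $t\times n$ $(d,h,r;x]$-inclusively disjunct matrix exists, and $R(t,d,h,r;x] = \frac{\log_2 N(t,d,h,r;x]}{t}$. *)

From mathcomp Require Import all_boot all_algebra.
From Stdlib Require Import Reals ClassicalEpsilon.

Set Implicit Arguments.
Unset Strict Implicit.
Unset Printing Implicit Defensive.

Definition col_supp (t n : nat) (T : 'M[bool]_(t, n)) (j : 'I_n) : {set 'I_t} :=
  [set i | T i j].

Definition Z_T (t n : nat) (T : 'M[bool]_(t, n)) (A B : {set 'I_n}) : nat :=
  #| (\bigcap_(j in B) col_supp T j) :\: (\bigcup_(j in A) col_supp T j) |.

Definition Y_T (t n : nat) (T : 'M[bool]_(t, n)) (A B : {set 'I_n}) : nat :=
  #| (\bigcap_(j in B) col_supp T j) :&: (\bigcup_(j in A) col_supp T j) |.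

Definition disjunct (t n : nat) (T : 'M[bool]_(t, n)) (d r z : nat) : Prop :=
  forall A B : {set 'I_n}, [disjoint A & B] -> #|A| = d -> #|B| = r ->
    z <= Z_T T A B.

Definition inclusive (t n : nat) (T : 'M[bool]_(t, n)) (h r y : nat) : Prop :=
  forall A B : {set 'I_n}, [disjoint A & B] -> #|A| = h -> #|B| = r ->
    Y_T T A B <= y.

Definition incl_disjunct (t n : nat) (T : 'M[bool]_(t, n)) (d h r x : nat) : Prop :=
  exists z y : nat, 0 < z /\ x + y <= z /\ disjunct T d r z /\ inclusive T h r y.

Definition admissible (t d h r x n : nat) : Prop :=
  exists T : 'M[bool]_(t, n), incl_disjunct T d h r x.

Definition is_N (t d h r x N : nat) : Prop :=
  admissible t d h r x N /\ forall n, admissible t d h r x n -> n <= N.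

(* N(t,d,h,r;x] : the (unique) maximum, chosen classically
   (it exists: for n >= d+r columns must be distinct, so n <= max(2^t, d+r-1)). *)
Definition N_max (t d h r x : nat) : nat :=
  epsilon (inhabits 0%nat) (fun N => is_N t d h r x N).

Definition R_rate (t d h r x : nat) : R :=
  (ln (INR (N_max t d h r x)) / ln 2 / INR t)%R.

From mathcomp Require Import all_boot all_algebra zify.
From Stdlib Require Import Reals Lra ClassicalEpsilon.
(* Importing Reals rebinds [^] on nat to [Nat.pow]; restore [expn]. *)
Import ssrnat.

Set Implicit Arguments.
Unset Strict Implicit.
Unset Printing Implicit Defensive.

(* Random coding.  Fill a t x 2^k array with i.i.d. uniform symbols of 'I_m,
   m = 64 D, and read it as the binary matrix with a 1 where the symbol is 0.
   For fixed disjoint A, B the rows counted by Z_T are independent events of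
   probability about m^-r, and those counted by Y_T have probability at most
   h m^-(r+1).  Bounding the exponential moments 2^(#rows) (a Chernoff bound)
   makes Z_T < x + y and Y_T > y exponentially unlikely in t / m^r, so a union
   bound over the at most 2^(k (d + r)) pairs (A, B) leaves a good code as long
   as k is about t / ((r+1) D m^r).  Hence N >= 2^k and R >= k / t, which is
   c / D^(r+1) up to O(1/t).  That N_max is an honest maximum comes from the
   columns of a disjunct matrix with at least d + r columns being distinct. *)

Lemma card_bigcup_le (T I : finType) (P : {pred I}) (A : I -> {set T}) :
  #|\bigcup_(i in P) A i| <= \sum_(i in P) #|A i|.
Proof.
elim/big_rec2: _ => [|i n U _ leUn]; first by rewrite cards0.
by rewrite (leq_trans (leq_card_setU _ _).1) ?leq_add2l.
Qed.

Lemma sum_le_of_card_le (I : finType) (P : {pred I}) (b : I -> nat) c K :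
  #|P| <= c -> (forall i, i \in P -> b i * c <= K) -> \sum_(i in P) b i <= K.
Proof.
move=> lePc le_bK; have [c0|c_gt0] := posnP c.
  by move: lePc; rewrite c0 leqn0 => /eqP/card0_eq P0; rewrite big_pred0.
rewrite -(leq_pmul2r c_gt0) big_distrl /=.
by rewrite (leq_trans (leq_sum _ le_bK)) // sum_nat_const mulnC leq_mul2l lePc orbT.
Qed.

Lemma card_ffun_forall (aT rT : finType) (P : aT -> pred rT) :
  #|[set f : {ffun aT -> rT} | [forall x, P x (f x)]]| = \prod_x #|[set y | P x y]|.
Proof.
rewrite (eq_card (B := finfun.family P)); last first.
  by move=> f; rewrite inE; apply/forallP/familyP.
rewrite card_family foldrE big_image; apply: eq_bigr => x _.
by apply: eq_card => y; rewrite inE.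
Qed.

Lemma cards_sum_nat (T : finType) (p : pred T) : #|[set x | p x]| = \sum_x p x.
Proof. by rewrite -sum1dep_card big_mkcond; apply: eq_bigr => x _; case: (p x). Qed.

Lemma card_set_not (T : finType) (p : pred T) :
  #|[set x | ~~ p x]| = #|T| - #|[set x | p x]|.
Proof. by rewrite -(cardsC [set x | p x]) addKn; apply: eq_card => x; rewrite !inE. Qed.

Lemma bin_le_expn n k : 'C(n, k) <= n ^ k.
Proof.
rewrite (leq_trans (leq_pmulr _ (fact_gt0 k))) // bin_ffact ffact_prod.
by rewrite -[k in n ^ k]card_ord -prod_nat_const leq_prod // => i _; rewrite leq_subr.
Qed.

Lemma exists_subset_card (T : finType) (S : {set T}) k :
  k <= #|S| -> exists2 A : {set T}, A \subset S & #|A| = k.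
Proof.
elim: k => [|k IH] le_kS; first by exists set0; rewrite ?sub0set ?cards0.
have [A sAS cA] := IH (ltnW le_kS).
have /card_gt0P [a] : 0 < #|S :\: A| by rewrite cardsD (setIidPr sAS) cA subn_gt0.
rewrite inE => /andP [aNA aS]; exists (a |: A); first by rewrite subUset sub1set aS.
by rewrite cardsU1 aNA cA.
Qed.

Lemma sum_exp2_card (I V : finType) (p : pred V) :
  \sum_(F : {ffun I -> V}) 2 ^ #|[set i | p (F i)]| = (#|V| + #|[set v | p v]|) ^ #|I|.
Proof.
transitivity (\sum_(F : {ffun I -> V}) \prod_i 2 ^ p (F i)).
  by apply: eq_bigr => F _; rewrite cards_sum_nat expn_sum.
rewrite -(bigA_distr_bigA (fun (_ : I) (v : V) => 2 ^ p v)) prod_nat_const /= cards_sum_nat.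
by congr (_ ^ _); rewrite -sum1_card -big_split; apply: eq_bigr => v _; case: (p v).
Qed.

(* Markov's inequality for the exponential moment [2 ^ #rows]; independence of
   the rows makes that moment a [#|I|]-th power. *)
Lemma card_count_ge (I V : finType) (p : pred V) s :
  #|[set F : {ffun I -> V} | s <= #|[set i | p (F i)]|]| * 2 ^ s
    <= (#|V| + #|[set v | p v]|) ^ #|I|.
Proof.
rewrite -sum_exp2_card -sum1dep_card big_distrl big_mkcond /=.
by apply: leq_sum => F _; case: ifP => // le_s; rewrite mul1n leq_pexp2l.
Qed.

Section RealEstimates.
Local Open Scope R_scope.

Lemma INR_addn a b : INR (a + b) = INR a + INR b.
Proof. exact: plus_INR. Qed.

Lemma INR_muln a b : INR (a * b) = INR a * INR b.
Proof. exact: mult_INR. Qed.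

Lemma INR_expn a b : INR (a ^ b) = INR a ^ b.
Proof. by elim: b => [|b IH] //; rewrite expnS INR_muln IH. Qed.

Lemma INR_subn a b : (b <= a)%N -> INR (a - b) = INR a - INR b.
Proof. by move/leP; exact: minus_INR. Qed.

Lemma exp_mulINR x t : exp (x * INR t) = exp x ^ t.
Proof.
elim: t => [|t IH]; first by rewrite Rmult_0_r exp_0.
by rewrite S_INR Rmult_plus_distr_l Rmult_1_r exp_plus IH /= Rmult_comm.
Qed.

Lemma exp_le_mono x y : x <= y -> exp x <= exp y.
Proof.
by case/Rle_lt_or_eq_dec => [/exp_increasing/Rlt_le | ->] //; apply: Rle_refl.
Qed.

Lemma pow_le_exp x t : -1 <= x -> (1 + x) ^ t <= exp (x * INR t).
Proof.
move=> x_ge; rewrite exp_mulINR; apply: pow_incr.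
by have := exp_ineq1_le x; lra.
Qed.

Lemma pow2_le_exp E : 2 ^ E <= exp (INR E).
Proof.
have := @pow_le_exp 1 E; rewrite Rmult_1_l; have -> : 1 + 1 = 2 by lra.
by apply; lra.
Qed.

Lemma exp_le_pow3 j : exp (INR j) <= 3 ^ j.
Proof.
rewrite -[INR j]Rmult_1_l exp_mulINR; apply: pow_incr.
by have := exp_pos 1; have := exp_le_3; lra.
Qed.

Lemma ln_le_mono x y : 0 < x -> x <= y -> ln x <= ln y.
Proof.
move=> x_gt0; case/Rle_lt_or_eq_dec => [/(ln_increasing _ _ x_gt0)/Rlt_le | ->] //.
exact: Rle_refl.
Qed.

End RealEstimates.

(* [(a - b)^t = a^t (1 - b/a)^t <= a^t e^(-bt/a)] while [2^E <= e^E <= e^(bt/a)]. *)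
Lemma expn_sub_tail a b E t :
  0 < a -> b <= a -> E * a <= b * t -> 2 ^ E * (a - b) ^ t <= a ^ t.
Proof.
move=> a_gt0 /leP/le_INR le_ba /leP/le_INR; rewrite !INR_muln => le_Eab.
apply/leP/INR_le; rewrite INR_muln !INR_expn INR_subn; last exact/leP/INR_le.
have a0 : (0 < INR a)%R by apply/lt_0_INR/ltP.
have b0 := pos_INR b.
set w := (INR b / INR a)%R.
have w01 : (0 <= w <= 1)%R.
  split; first by apply: Rmult_le_pos; [|apply/Rlt_le/Rinv_0_lt_compat].
  by apply: (Rmult_le_reg_r (INR a)) => //; rewrite /w; field_simplify; lra.
have E_le : (INR E <= w * INR t)%R.
  by apply: (Rmult_le_reg_r (INR a)) => //; rewrite /w; field_simplify; lra.
have decay : (2 ^ E * (1 + - w) ^ t <= 1)%R.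
  have le2 := pow2_le_exp E; have le1 := @pow_le_exp (- w) t ltac:(lra).
  apply: (Rle_trans _ (exp (w * INR t) * exp (- w * INR t))).
    apply: Rmult_le_compat; try apply: pow_le; try lra.
    exact: Rle_trans le2 (exp_le_mono E_le).
  by rewrite -exp_plus -exp_0; apply: exp_le_mono; lra.
have -> : INR 2 = 2%R by rewrite INR_IZR_INZ.
have -> : (INR a - INR b = INR a * (1 + - w))%R by rewrite /w; field; lra.
rewrite Rpow_mult_distr -Rmult_assoc [(2 ^ E * _)%R]Rmult_comm Rmult_assoc.
have := pow_lt _ t a0; nra.
Qed.

Lemma expn_add_tail a b j t :
  0 < a -> b * t <= j * a -> (a + b) ^ t <= 3 ^ j * a ^ t.
Proof.
move=> a_gt0 /leP/le_INR; rewrite !INR_muln => le_btja.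
apply/leP/INR_le; rewrite INR_muln !INR_expn INR_addn.
have a0 : (0 < INR a)%R by apply/lt_0_INR/ltP.
have b0 := pos_INR b.
set v := (INR b / INR a)%R.
have v0 : (0 <= v)%R by apply: Rmult_le_pos; [|apply/Rlt_le/Rinv_0_lt_compat].
have vt_le : (v * INR t <= INR j)%R.
  by apply: (Rmult_le_reg_r (INR a)) => //; rewrite /v; field_simplify; lra.
have growth : ((1 + v) ^ t <= INR 3 ^ j)%R.
  apply: Rle_trans (pow_le_exp t (ltac:(lra) : (-1 <= v)%R)) _.
  have -> : INR 3 = 3%R by rewrite INR_IZR_INZ.
  exact: Rle_trans (exp_le_mono vt_le) (exp_le_pow3 j).
have -> : (INR a + INR b = INR a * (1 + v))%R by rewrite /v; field; lra.
rewrite Rpow_mult_distr Rmult_comm.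
by apply: Rmult_le_compat_r => //; apply: pow_le; lra.
Qed.

Section RandomCode.
Variables n m : nat.
Implicit Types (A B S : {set 'I_n}) (v : {ffun 'I_n -> 'I_m}).

Definition zero_on S v := [forall j in S, v j == 0 :> nat].
Definition nonzero_on S v := [forall j in S, v j != 0 :> nat].

(* A random code has i.i.d. uniform symbols, so each entry of its matrix is 1
   independently with probability 1/m. *)
Definition code_mx t (F : {ffun 'I_t -> {ffun 'I_n -> 'I_m}}) : 'M[bool]_(t, n) :=
  \matrix_(i, j) (F i j == 0 :> nat).

Section CodeMatrix.
Variables (t : nat) (F : {ffun 'I_t -> {ffun 'I_n -> 'I_m}}).

Lemma mem_col_supp_code_mx i j : (i \in col_supp (code_mx F) j) = (F i j == 0 :> nat).
Proof. by rewrite inE mxE. Qed.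

Lemma mem_bigcap_code_mx B i :
  (i \in \bigcap_(j in B) col_supp (code_mx F) j) = zero_on B (F i).
Proof.
by apply/bigcapP/forall_inP => H j /H; rewrite mem_col_supp_code_mx.
Qed.

Lemma mem_bigcup_code_mx A i :
  (i \in \bigcup_(j in A) col_supp (code_mx F) j) = ~~ nonzero_on A (F i).
Proof.
apply/bigcupP/forall_inPn => -[j jA Fij]; exists j => //.
  by rewrite negbK -mem_col_supp_code_mx.
by rewrite mem_col_supp_code_mx; rewrite negbK in Fij.
Qed.

Lemma Z_T_code_mx A B :
  Z_T (code_mx F) A B = #|[set i | zero_on B (F i) && nonzero_on A (F i)]|.
Proof.
apply: eq_card => i.
by rewrite !inE mem_bigcap_code_mx mem_bigcup_code_mx negbK andbC.
Qed.

Lemma Y_T_code_mx A B :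
  Y_T (code_mx F) A B = #|[set i | zero_on B (F i) && ~~ nonzero_on A (F i)]|.
Proof. by apply: eq_card => i; rewrite !inE mem_bigcap_code_mx mem_bigcup_code_mx. Qed.

End CodeMatrix.

Hypothesis m_gt0 : 0 < m.

Lemma card_ord_eq0 : #|[set s : 'I_m | s == 0 :> nat]| = 1.
Proof.
rewrite -(card1 (Ordinal m_gt0)); apply: eq_card => s; rewrite !inE.
by apply/eqP/eqP => [s0|->] //; exact: val_inj.
Qed.

Lemma card_ord_neq0 : #|[set s : 'I_m | s != 0 :> nat]| = m - 1.
Proof. by rewrite card_set_not card_ord card_ord_eq0. Qed.

Lemma card_ord_all : #|[set s : 'I_m | true]| = m.
Proof. by rewrite -[RHS]card_ord; apply: eq_card => s; rewrite inE. Qed.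

Lemma card_zero_on S : #|[set v | zero_on S v]| * m ^ #|S| = m ^ n.
Proof.
rewrite (card_ffun_forall (fun j (s : 'I_m) => (j \in S) ==> (s == 0 :> nat))).
rewrite -prod_nat_const [\prod_(i in S) m]big_mkcond -big_split /=.
rewrite -[n in RHS]card_ord -prod_nat_const; apply: eq_bigr => j _.
case: (j \in S) => /=; first by rewrite card_ord_eq0 mul1n.
by rewrite muln1 card_ord_all.
Qed.

Lemma card_zero_nonzero_on A B : [disjoint A & B] ->
  #|[set v | zero_on B v && nonzero_on A v]| * m ^ (#|A| + #|B|)
    = (m - 1) ^ #|A| * m ^ n.
Proof.
move=> dAB.
pose P j (s : 'I_m) := if j \in B then s == 0 :> nat else (j \in A) ==> (s != 0 :> nat).
have -> : [set v | zero_on B v && nonzero_on A v]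
          = [set v : {ffun 'I_n -> 'I_m} | [forall j, P j (v j)]].
  apply/setP => v; rewrite !inE /P; apply/andP/forallP.
    by case=> /forall_inP zB /forall_inP nzA j; case: ifP => [/zB | _] //; apply/implyP/nzA.
  move=> H; split; apply/forall_inP => j jX; have := H j.
    by rewrite jX.
  by rewrite (disjointFr dAB jX) jX.
have -> : m ^ n = \prod_(j : 'I_n) m by rewrite prod_nat_const card_ord.
rewrite card_ffun_forall expnD -!prod_nat_const.
rewrite [\prod_(j in A) _]big_mkcond [\prod_(j in B) _]big_mkcond.
rewrite [\prod_(j in A) _]big_mkcond -!big_split /=; apply: eq_bigr => j _.
rewrite /P; have [jB | jNB] := boolP (j \in B).
  by rewrite (disjointFl dAB jB) card_ord_eq0 !mul1n.
by case: (j \in A); rewrite /= ?card_ord_neq0 ?card_ord_all ?muln1 ?mul1n.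
Qed.

Lemma card_zero_not_nonzero_on A B : [disjoint A & B] ->
  #|[set v | zero_on B v && ~~ nonzero_on A v]| * m ^ #|B|.+1 <= #|A| * m ^ n.
Proof.
move=> dAB.
have sub : [set v | zero_on B v && ~~ nonzero_on A v]
           \subset \bigcup_(a in A) [set v | zero_on (a |: B) v].
  apply/subsetP => v; rewrite inE => /andP [zB /forall_inPn [a aA]].
  rewrite negbK => va; apply/bigcupP; exists a => //; rewrite inE.
  by apply/forall_inP => j /setU1P [-> | /(forall_inP zB)].
apply: leq_trans (leq_mul (subset_leq_card sub) (leqnn _)) _.
apply: leq_trans (leq_mul (card_bigcup_le _ _) (leqnn _)) _.
rewrite big_distrl -sum_nat_const; apply: eq_leq; apply: eq_bigr => a aA.
by rewrite -(card_zero_on (a |: B)) cardsU1 (disjointFr dAB aA).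
Qed.

Local Notation code t := {ffun 'I_t -> {ffun 'I_n -> 'I_m}}.

Lemma card_words : #|{ffun 'I_n -> 'I_m}| = m ^ n.
Proof. by rewrite card_ffun !card_ord. Qed.

(* With p = (m - 1)^|A| / m^(|A| + |B|), the probability that a row is counted
   by Z_T, the hypothesis reads z + e <= p t / 2. *)
Lemma card_Z_T_lt t A B z e : [disjoint A & B] ->
    (z + e) * (2 * m ^ (#|A| + #|B|)) <= (m - 1) ^ #|A| * t ->
  #|[set F : code t | Z_T (code_mx F) A B < z]| * 2 ^ e <= (m ^ n) ^ t.
Proof.
move=> dAB cond; set M := m ^ n.
pose good v := zero_on B v && nonzero_on A v.
set G := #|[set v | good v]|.
have M_gt0 : 0 < M by rewrite expn_gt0 m_gt0.
have G_le : G <= M by rewrite /M -card_words max_card.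
have markov := card_count_ge 'I_t (predC good) (t - z).
rewrite card_set_not card_words card_ord -/M -/G in markov.
rewrite (_ : M + (M - G) = 2 * M - G) in markov; last by lia.
have few_good : [set F : code t | Z_T (code_mx F) A B < z]
    \subset [set F : code t | t - z <= #|[set i | predC good (F i)]|].
  apply/subsetP => F; rewrite !inE Z_T_code_mx card_set_not card_ord.
  by move/ltnW; apply: leq_sub2l.
have tail : 2 ^ (z + e) * (2 * M - G) ^ t <= (2 * M) ^ t.
  apply: expn_sub_tail; [by rewrite muln_gt0 | by rewrite (leq_trans G_le) ?leq_pmull |].
  have mAB_gt0 : 0 < m ^ (#|A| + #|B|) by rewrite expn_gt0 m_gt0.
  have GAB := card_zero_nonzero_on dAB; rewrite -/M -/G in GAB.
  rewrite -(leq_pmul2r mAB_gt0) [G * t * _]mulnAC GAB.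
  have := leq_mul cond (leqnn M).
  move: (m ^ _) ((m - 1) ^ _) => X Y; nia.
have le_exp : e + t <= t - z + (z + e).
  by rewrite addnA [e + t]addnC leq_add2r addnC -leq_subLR.
rewrite -(leq_pmul2r (expn_gt0 2 t)) -mulnA -expnD.
apply: leq_trans (leq_mul (subset_leq_card few_good) (leq_pexp2l (isT : 0 < 2) le_exp)) _.
rewrite expnD mulnA (leq_trans (leq_mul markov (leqnn _))) // mulnC.
by apply: leq_trans tail _; rewrite expnMn mulnC.
Qed.

(* |A| / m^(|B| + 1) bounds the probability that a row is counted by Y_T. *)
Lemma card_Y_T_gt t A B y j e : [disjoint A & B] ->
    #|A| * t <= j * m ^ #|B|.+1 -> e + 2 * j <= y.+1 ->
  #|[set F : code t | y < Y_T (code_mx F) A B]| * 2 ^ e <= (m ^ n) ^ t.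
Proof.
move=> dAB cond le_e; set M := m ^ n.
pose bad v := zero_on B v && ~~ nonzero_on A v.
set G := #|[set v | bad v]|.
have markov := card_count_ge 'I_t bad y.+1.
rewrite card_words card_ord -/M -/G in markov.
have many_bad : [set F : code t | y < Y_T (code_mx F) A B]
    \subset [set F : code t | y < #|[set i | bad (F i)]|].
  by apply/subsetP => F; rewrite !inE Y_T_code_mx.
have growth : (M + G) ^ t <= 3 ^ j * M ^ t.
  apply: expn_add_tail; first by rewrite expn_gt0 m_gt0.
  have mB_gt0 : 0 < m ^ #|B|.+1 by rewrite expn_gt0 m_gt0.
  have GAB := card_zero_not_nonzero_on dAB; rewrite -/M -/G in GAB.
  rewrite -(leq_pmul2r mB_gt0).
  have := leq_mul GAB (leqnn t); have := leq_mul cond (leqnn M).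
  move: (m ^ _) => X; nia.
have le34 : 3 ^ j <= 2 ^ (2 * j).
  by rewrite expnM; case: (posnP j) => [-> | j_gt0] //; rewrite leq_exp2r.
rewrite -(leq_pmul2r (expn_gt0 2 (2 * j))) -mulnA -expnD.
apply: leq_trans (leq_mul (subset_leq_card many_bad) (leq_pexp2l _ le_e)) _ => //.
apply: leq_trans markov (leq_trans growth _).
by rewrite mulnC leq_mul2l le34 orbT.
Qed.

Definition disjoint_pairs (d r : nat) : {set {set 'I_n} * {set 'I_n}} :=
  [set AB : {set 'I_n} * {set 'I_n} |
     [&& [disjoint AB.1 & AB.2], #|AB.1| == d & #|AB.2| == r]].

Lemma card_disjoint_pairs d r : #|disjoint_pairs d r| <= n ^ (d + r).
Proof.
pose sized k := [set S : {set 'I_n} | #|S| == k].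
have sub : disjoint_pairs d r \subset setX (sized d) (sized r).
  by apply/subsetP => -[A B]; rewrite !inE /= => /and3P [_ -> ->].
apply: leq_trans (subset_leq_card sub) _.
by rewrite cardsX !card_draws card_ord expnD leq_mul ?bin_le_expn.
Qed.

Lemma exists_good_code t d h r z y :
    (forall A B, [disjoint A & B] -> #|A| = d -> #|B| = r ->
       #|[set F : code t | Z_T (code_mx F) A B < z]| * (4 * n ^ (d + r)) <= (m ^ n) ^ t) ->
    (forall A B, [disjoint A & B] -> #|A| = h -> #|B| = r ->
       #|[set F : code t | y < Y_T (code_mx F) A B]| * (4 * n ^ (h + r)) <= (m ^ n) ^ t) ->
  exists F : code t, disjunct (code_mx F) d r z /\ inclusive (code_mx F) h r y.
Proof.
move=> fewZ fewY.
pose badZ AB := [set F : code t | Z_T (code_mx F) AB.1 AB.2 < z].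
pose badY AB := [set F : code t | y < Y_T (code_mx F) AB.1 AB.2].
pose bad := \bigcup_(AB in disjoint_pairs d r) badZ AB
            :|: \bigcup_(AB in disjoint_pairs h r) badY AB.
have sum_few k (X : {set 'I_n} * {set 'I_n} -> {set code t}) :
    (forall A B, [disjoint A & B] -> #|A| = k -> #|B| = r ->
       #|X (A, B)| * (4 * n ^ (k + r)) <= (m ^ n) ^ t) ->
    4 * \sum_(AB in disjoint_pairs k r) #|X AB| <= (m ^ n) ^ t.
  move=> few; rewrite big_distrr; apply: sum_le_of_card_le (card_disjoint_pairs k r) _.
  move=> -[A B]; rewrite inE => /and3P [dAB /eqP cA /eqP cB].
  by rewrite /= -mulnA mulnCA; apply: few.
have card_bad : #|bad| < #|{: code t}|.
  rewrite card_ffun card_words card_ord.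
  apply: leq_ltn_trans (leq_card_setU _ _).1 _.
  apply: leq_ltn_trans (leq_add (card_bigcup_le _ _) (card_bigcup_le _ _)) _.
  have quarters a b K : 0 < K -> 4 * a <= K -> 4 * b <= K -> a + b < K by lia.
  apply: quarters; [by rewrite !expn_gt0 m_gt0 | exact: sum_few | exact: sum_few].
have /card_gt0P [F] : 0 < #|~: bad| by rewrite cardsCs setCK subn_gt0.
rewrite inE => F_good; exists F; split => A B dAB cA cB; rewrite leqNgt;
  apply: contra F_good => F_bad; rewrite inE; apply/orP.
  by left; apply/bigcupP; exists (A, B); rewrite ?inE /= ?dAB ?cA ?cB ?eqxx.
by right; apply/bigcupP; exists (A, B); rewrite ?inE /= ?dAB ?cA ?cB ?eqxx.
Qed.

End RandomCode.

Lemma expn_sub1_ge m d : m ^ d * (m - d) <= (m - 1) ^ d * m.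
Proof.
elim: d => [|d IH]; first by rewrite subn0.
rewrite !expnS -mulnA; apply: leq_trans (_ : _ <= (m - 1) * (m ^ d * (m - d))) _.
  have key : m * (m - d.+1) <= (m - 1) * (m - d) by nia.
  by rewrite !(mulnCA _ (m ^ d)) leq_mul2l key orbT.
by rewrite -mulnA leq_mul2l IH orbT.
Qed.

Lemma Z_T_tail_condition m d r w t :
    0 < m -> 64 * d <= m -> 128 * w * m ^ r <= 63 * t ->
  w * (2 * m ^ (d + r)) <= (m - 1) ^ d * t.
Proof.
move=> m_gt0 dm wt; have bern := expn_sub1_ge m d.
rewrite expnD -(leq_pmul2l (_ : 0 < 64 * m)); last by rewrite muln_gt0.
move: (m ^ d) ((m - 1) ^ d) (m ^ r) bern wt => X Y U bern wt.
have step1 : 64 * m * (w * (2 * (X * U))) <= X * m * (63 * t).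
  by rewrite (_ : 64 * m * _ = X * m * (128 * w * U)) ?leq_mul2l ?wt ?orbT //; nia.
apply: leq_trans step1 _.
have h63 : 63 * m <= 64 * (m - d) by lia.
have := leq_mul (leq_mul h63 (leqnn X)) (leqnn t).
have := leq_mul (leq_mul (leqnn 64) bern) (leqnn t).
move: (m - d) => k; nia.
Qed.

(* A row is counted by Z_T with probability about m^-r, so with the unit
   s = t / (64 m^r) the count Z_T is about 64 s, while Y_T is at most about s;
   the thresholds z = x + 8 s, y = 8 s (and j = s + 1 in the Y-tail) leave
   room for the union bound over 4 n^(d+r) pairs as long as k (d+r) <= s. *)
Lemma admissible_pow2 t d h r x D :
    0 < D -> d <= D -> h <= D -> 0 < x ->
    64 * (64 * D) ^ r <= t -> x * (8 * (64 * D) ^ r) <= t ->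
  admissible t d h r x (2 ^ (t %/ (r.+1 * D * (64 * (64 * D) ^ r)))).
Proof.
move=> D_gt0 dD hD x_gt0 tU tx.
set m := 64 * D in tU tx *; set U := m ^ r in tU tx *.
set k := t %/ _; set s := t %/ (64 * U).
have m_gt0 : 0 < m by rewrite muln_gt0.
have U_gt0 : 0 < U by rewrite expn_gt0 m_gt0.
have tsU : t < s.+1 * (64 * U) by apply: ltn_ceil; rewrite muln_gt0.
have s_gt0 : 0 < s by rewrite divn_gt0 ?muln_gt0.
have ks a : a <= D -> k * (a + r) <= s.
  move=> aD; have ar : a + r <= r.+1 * D by nia.
  rewrite leq_divRL ?muln_gt0 // -mulnA.
  apply: leq_trans (leq_divM t (r.+1 * D * (64 * U))).
  by rewrite leq_mul2l leq_mul2r ar !orbT.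
suff [F [dis inc]] : exists F : {ffun 'I_t -> {ffun 'I_(2 ^ k) -> 'I_m}},
    disjunct (code_mx F) d r (x + 8 * s) /\ inclusive (code_mx F) h r (8 * s).
  by exists (code_mx F), (x + 8 * s), (8 * s); rewrite addn_gt0 x_gt0.
apply: exists_good_code => // A B dAB cA cB; rewrite -expnM -[4 * _]/(2 ^ 2 * _) -expnD.
- apply: card_Z_T_lt => //; rewrite cA cB; apply: Z_T_tail_condition => //.
    by rewrite leq_mul2l dD orbT.
  rewrite -/U; have := leq_mul (ks d dD) (leqnn U); nia.
- apply: (@card_Y_T_gt _ _ m_gt0 _ _ _ _ s.+1) => //.
    rewrite cA cB expnS -/U /m; have := leq_mul hD (ltnW tsU); nia.
  have := ks h hD; lia.
Qed.

Lemma separating_sets n d r (j j' : 'I_n) :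
    j != j' -> 0 < d -> 0 < r -> d + r <= n ->
  exists A B : {set 'I_n}, [/\ [disjoint A & B], #|A| = d, #|B| = r, j' \in A & j \in B].
Proof.
move=> neq d_gt0 r_gt0 drn.
set S := ~: [set j; j'].
have outS y : y \in S -> (y != j) && (y != j') by rewrite !inE negb_or.
have cS : #|S| = n - 2 by rewrite cardsCs setCK cards2 neq card_ord.
have [A0 sA0 cA0] := @exists_subset_card _ S d.-1 ltac:(lia).
have [B0 sB0 cB0] := @exists_subset_card _ (S :\: A0) r.-1
  ltac:(rewrite cardsD (setIidPr sA0); lia).
have outB0 y : y \in B0 -> (y != j) && (y != j').
  by move/(subsetP sB0); rewrite inE => /andP [_ /outS].
have j'A0 : j' \notin A0 by apply/negP => /(subsetP sA0)/outS; rewrite eqxx andbF.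
have jB0 : j \notin B0 by apply/negP => /outB0; rewrite eqxx.
exists (j' |: A0), (j |: B0); split; rewrite ?setU11 //.
- rewrite disjoints_subset; apply/subsetP => y; rewrite !inE negb_or.
  case/orP => [/eqP -> | yA0].
    by rewrite eq_sym neq; apply/negP => /outB0; rewrite eqxx andbF.
  have /outS /andP [-> _] := subsetP sA0 y yA0.
  by apply/negP => /(subsetP sB0); rewrite inE yA0.
- by rewrite cardsU1 j'A0 cA0 add1n prednK.
- by rewrite cardsU1 jB0 cB0 add1n prednK.
Qed.

Lemma col_injective_of_disjunct t n (T : 'M[bool]_(t, n)) d r z :
    0 < z -> 0 < d -> 0 < r -> d + r <= n -> disjunct T d r z ->
  injective (fun j => col j T).
Proof.
move=> z_gt0 d_gt0 r_gt0 drn dis j j' eq_col; apply/eqP; apply: contraT => neq.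
have [A [B [dAB cA cB j'A jB]]] := separating_sets neq d_gt0 r_gt0 drn.
suff Z0 : Z_T T A B = 0.
  by have := dis A B dAB cA cB; rewrite Z0 leqn0 => /eqP z0; rewrite z0 in z_gt0.
apply/eqP; rewrite cards_eq0; apply/eqP/setP => i; rewrite !inE.
apply/negbTE; rewrite negb_and negbK orbC.
case: (boolP (i \in _)) => //= /bigcapP /(_ j jB); rewrite !inE => Tij.
apply/bigcupP; exists j' => //; rewrite inE.
by have := congr1 (fun c : 'cV_t => c i ord0) eq_col; rewrite !mxE => <-.
Qed.

Lemma admissible_le t d h r x n :
  0 < d -> 0 < r -> admissible t d h r x n -> n <= maxn (2 ^ t) (d + r).
Proof.
move=> d_gt0 r_gt0 [T [z [y [z_gt0 [_ [dis _]]]]]].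
rewrite leq_max; case: (leqP (d + r) n) => [drn | /ltnW ->]; last by rewrite orbT.
have := leq_card _ (col_injective_of_disjunct z_gt0 d_gt0 r_gt0 drn dis).
by rewrite card_mx card_bool card_ord muln1 => ->.
Qed.

Lemma exists_max_nat (P : nat -> Prop) k M :
  P k -> (forall n, P n -> n <= M) -> exists N, P N /\ forall n, P n -> n <= N.
Proof.
elim: M => [|M IH] Pk le_PM.
  by exists 0; split=> [|n /le_PM //]; have := le_PM k Pk; rewrite leqn0 => /eqP <-.
have [PM1 | NPM1] := classic (P M.+1); first by exists M.+1.
apply: IH Pk _ => n Pn; have := le_PM n Pn; rewrite leq_eqVlt => /orP [/eqP En | //].
by rewrite En in Pn.
Qed.

Lemma admissible_le_N_max t d h r x n :
  0 < d -> 0 < r -> admissible t d h r x n -> n <= N_max t d h r x.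
Proof.
move=> d_gt0 r_gt0 adm.
have [_] : is_N t d h r x (N_max t d h r x).
  apply: epsilon_spec; apply: (exists_max_nat adm) => k.
  exact: admissible_le.
by apply.
Qed.

Section Rate.
Local Open Scope R_scope.

Lemma R_rate_ge t d h r x q : (0 < d)%N -> (0 < r)%N -> (0 < t)%N -> (0 < q)%N ->
  admissible t d h r x (2 ^ (t %/ q)) -> / INR q - / INR t <= R_rate t d h r x.
Proof.
move=> d_gt0 r_gt0 t_gt0 q_gt0 adm; rewrite /R_rate.
set k := (t %/ q)%N; set N := N_max t d h r x.
have t0 : 0 < INR t by apply/lt_0_INR/ltP.
have q0 : 0 < INR q by apply/lt_0_INR/ltP.
have ln2 : 0 < ln 2 by have := ln_lt_2; lra.
have tq : INR t < (INR k + 1) * INR q.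
  by rewrite -S_INR -INR_muln; apply/lt_INR/ltP/ltn_ceil.
have k_le : INR k * ln 2 <= ln (INR N).
  rewrite -ln_pow; last lra.
  apply: ln_le_mono; first by apply: pow_lt; lra.
  have := le_INR _ _ (elimT leP (admissible_le_N_max d_gt0 r_gt0 adm)).
  by rewrite INR_expn INR_IZR_INZ.
apply: (Rle_trans _ (INR k / INR t)).
  apply: (Rmult_le_reg_r (INR t * INR q)); first exact: Rmult_lt_0_compat.
  by field_simplify; lra.
apply: Rmult_le_compat_r; first by apply/Rlt_le/Rinv_0_lt_compat.
by apply: (Rmult_le_reg_r (ln 2)) => //; field_simplify; lra.
Qed.

Lemma INR_mul64_expn n r : INR ((64 * n) ^ r) = 64 ^ r * INR n ^ r.
Proof. by rewrite INR_expn INR_muln Rpow_mult_distr INR_IZR_INZ. Qed.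

Lemma scaled_le_of_Rle x t r n : (0 < n)%N ->
  INR x <= / (8 * 64 ^ r) / INR n ^ r * INR t -> (x * (8 * (64 * n) ^ r) <= t)%N.
Proof.
move=> n_gt0 le_x; apply/leP/INR_le; rewrite !INR_muln INR_mul64_expn.
have n0 : 0 < INR n by apply/lt_0_INR/ltP.
have p : 0 < 64 ^ r * INR n ^ r by apply: Rmult_lt_0_compat; apply: pow_lt; lra.
have -> : INR 8 = 8 by rewrite INR_IZR_INZ.
apply: (Rle_trans _ (/ (8 * 64 ^ r) / INR n ^ r * INR t * (8 * (64 ^ r * INR n ^ r)))).
  by apply: Rmult_le_compat_r => //; lra.
by right; field; split; apply: pow_nonzero; lra.
Qed.

Lemma rate_margin r n t eps :
    (0 < n)%N -> (0 < t)%N -> INR n ^ (r + 1) <= eps * INR t ->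
  (/ (INR r.+1 * 64 ^ r.+1) - eps) / INR n ^ (r + 1)
    <= / INR (r.+1 * n * (64 * (64 * n) ^ r)) - / INR t.
Proof.
move=> n_gt0 t_gt0 le_eps.
have n0 : 0 < INR n by apply/lt_0_INR/ltP.
have t0 : 0 < INR t by apply/lt_0_INR/ltP.
have r0 : 0 < INR r.+1 by apply/lt_0_INR/ltP.
have Dr0 : 0 < INR n ^ (r + 1) by apply: pow_lt.
have p64 : 0 < 64 ^ r.+1 by apply: pow_lt; lra.
have -> : INR (r.+1 * n * (64 * (64 * n) ^ r)) = INR r.+1 * 64 ^ r.+1 * INR n ^ (r + 1).
  by rewrite !INR_muln INR_mul64_expn INR_IZR_INZ pow_add /=; ring.
have inv_t : / INR t <= eps / INR n ^ (r + 1).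
  apply: (Rmult_le_reg_r (INR t * INR n ^ (r + 1))); first exact: Rmult_lt_0_compat.
  by field_simplify; lra.
have -> : / (INR r.+1 * 64 ^ r.+1 * INR n ^ (r + 1))
          = / (INR r.+1 * 64 ^ r.+1) / INR n ^ (r + 1).
  by field; repeat split; lra.
by rewrite /Rdiv Rmult_minus_distr_r; lra.
Qed.

End Rate.

Theorem theorem3p1 :
  forall r : nat, (0 < r)%nat ->
  exists c0 c : R, (0 < c0)%R /\ (0 < c)%R /\
    forall d h : nat, (0 < d)%nat ->
      let D := INR (maxn d h) in
      (* o(1) term: for every eps > 0, eventually in t, uniformly in x *)
      forall eps : R, (0 < eps)%R ->
      exists T0 : nat,
        forall t x : nat, (T0 <= t)%nat -> (0 < t)%nat -> (0 < x)%nat ->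
          (INR x <= c0 / D ^ r * INR t)%R ->
          ((c - eps) / D ^ (r + 1) <= R_rate t d h r x)%R.
Proof.
move=> r r_gt0.
have p64 k : (0 < 64 ^ k)%R by apply: pow_lt; lra.
have r0 : (0 < INR r.+1)%R by apply/lt_0_INR/ltP.
exists (/ (8 * 64 ^ r))%R, (/ (INR r.+1 * 64 ^ r.+1))%R.
split; first by apply: Rinv_0_lt_compat; have := p64 r; lra.
split; first by apply/Rinv_0_lt_compat/Rmult_lt_0_compat.
move=> d h d_gt0 D eps eps_gt0.
have D_gt0 : (0 < maxn d h)%N by rewrite leq_max d_gt0.
have [N1 N1_big] := INR_archimed eps (D ^ (r + 1)) eps_gt0.
exists (maxn (64 * (64 * maxn d h) ^ r) N1) => t x.
rewrite geq_max => /andP [tU tN1] t_gt0 x_gt0 le_x.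
have adm := admissible_pow2 D_gt0 (leq_maxl d h) (leq_maxr d h) x_gt0 tU
              (scaled_le_of_Rle D_gt0 le_x).
have q_gt0 : (0 < r.+1 * maxn d h * (64 * (64 * maxn d h) ^ r))%N.
  by rewrite !muln_gt0 D_gt0 expn_gt0 muln_gt0 D_gt0.
apply: Rle_trans (R_rate_ge d_gt0 r_gt0 t_gt0 q_gt0 adm).
apply: rate_margin => //.
have := Rmult_le_compat_r eps _ _ (Rlt_le _ _ eps_gt0) (le_INR _ _ (elimT leP tN1)).
rewrite /D in N1_big; lra.
Qed.
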